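(* Consider a chemical reaction network satisfying (H1) and (H2) which contains the two connected components \[ Y+S_0\rightleftarrows U_1\to Y+S_1\rightleftarrows\cdots\rightleftarrows U_L\to Y+S_L,\qquad \widetilde Y+S_L\rightleftarrows V_L\to \widetilde Y+S_{L-1}\rightleftarrows\cdots\rightleftarrows V_1\to\widetilde Y+S_0, \] $L\ge1$, with rate constants as in the context. Then all the constants $a_j,b_j,c_j,\tilde a_j,\tilde b_j,\tilde c_j$ ($1\le j\le L$) of these two components are identifiable from $s_L$ using the derivatives $s_L^{(\ell)}$ with $1\le\ell\le\max\{2,2L-1\}$.
   Context: Species are capital letters, concentrations the corresponding lower-case letters. A chemical reaction network is a finite directed graph on complexes (nonnegative integer combinations of species) with reactions $y\to y'$ carrying rate constants $k_{yy'}>0$ (vector $\mathbf{k}$); mass-action system $\dot{\mathbf{x}}=\sum k_{yy'}\mathbf{x}^y(y'-y)$. Total derivative of a polynomial: $\dot\varphi=\sum_i\frac{\partial\varphi}{\partial x_i}\dot x_i$ with $\dot x_i$ replaced by the right-hand side; $\varphi^{(\ell)}$ its $\ell$-th iterate, a polynomial in $\mathbf{x}$ with coefficients polynomial in $\mathbf{k}$. A map $\psi$ of $\mathbf{k}$ is identifiable from variables $x_{i_1},\dots,x_{i_t}$ using orders $1\le\ell\le D$ if equality of all $x_{i_j}^{(\ell)}(\mathbf{x},\mathbf{k}^* )$ and $x_{i_j}^{(\ell)}(\mathbf{x},\mathbf{k}^{**})$ as polynomials in $\mathbf{x}$ ($1\le\ell\le D$, all $j$) implies $\psi(\mathbf{k}^*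 )=\psi(\mathbf{k}^{**})$, for all positive $\mathbf{k}^*,\mathbf{k}^{**}$. Hypotheses. (H1) Every connected component has the form $Y+S_0\rightleftarrows U_1\to\cdots\rightleftarrows U_L\to Y+S_L$ (reactions $Y+S_{j-1}\to U_j$, $U_j\to Y+S_{j-1}$, $U_j\to Y+S_j$) with a unique enzyme $Y$; intermediates distinct throughout the network; non-intermediates of one component pairwise distinct but possibly appearing in other components; each complex lies in a unique component. $\mathscr{S}_U$ = set of substrates/products of the component of intermediate $U$. (H2) A partition $\mathscr{S}^{(0)}\sqcup\cdots\sqcup\mathscr{S}^{(M)}$ ($M\ge2$, nonempty parts, $\mathscr{S}^{(0)}$ the intermediates) of the species such that for each intermediate $U$ with enzyme $Y$ there is $\alpha\ge1$ with $\mathscr{S}_U\subseteq\mathscr{S}^{(\alpha)}$, $Y\notin\mathscr{S}^{(\alpha)}$. Rate constants: first component: $Y+S_{j-1}\to U_j$ rate $a_j$, $U_j\to Y+S_{j-1}$ rate $b_j$, $U_j\to Y+S_j$ rate $c_j$. Second component: $\widetilde Y+S_j\to V_j$ rate $\tilde a_j$, $V_j\to\widetilde Y+S_j$ rate $\tilde b_j$, $V_j\to\widetilde Y+S_{j-1}$ rate $\tilde c_j$ ($1\le j\le L$). *)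

From Stdlib Require Import Reals List Arith Lia.
Import ListNotations.
Open Scope R_scope.

(** * Polynomial expressions in the concentrations x_0, x_1, ... (species are nats)
    with real coefficients, together with formal partial derivatives. *)
Inductive pexpr : Type :=
| PC : R -> pexpr
| PX : nat -> pexpr
| PAdd : pexpr -> pexpr -> pexpr
| PMul : pexpr -> pexpr -> pexpr.

Fixpoint peval (x : nat -> R) (p : pexpr) : R :=
  match p with
  | PC c => c
  | PX i => x i
  | PAdd p q => peval x p + peval x q
  | PMul p q => peval x p * peval x q
  end.

Fixpoint pderiv (i : nat) (p : pexpr) : pexpr :=
  match p with
  | PC _ => PC 0
  | PX j => PC (if Nat.eqb j i then 1 else 0)
  | PAdd p q => PAdd (pderiv i p) (pderiv i q)
  | PMul p q => PAdd (PMul (pderiv i p) q) (PMul p (pderiv i q))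
  end.

Fixpoint ppow (p : pexpr) (m : nat) : pexpr :=
  match m with
  | O => PC 1
  | S m' => PMul p (ppow p m')
  end.

(** complexes: nonnegative integer combinations of the species 0..n-1 *)
Definition complex := nat -> nat.

Definition monomial (n : nat) (y : complex) : pexpr :=
  fold_right (fun i acc => PMul (ppow (PX i) (y i)) acc) (PC 1) (seq 0 n).

Record reaction := mkReaction { r_src : complex; r_tgt : complex; r_rate : R }.

Definition mass_action (n : nat) (rs : list reaction) (i : nat) : pexpr :=
  fold_right
    (fun r acc => PAdd (PMul (PC (r_rate r * (INR (r_tgt r i) - INR (r_src r i))))
                             (monomial n (r_src r))) acc)
    (PC 0) rs.

Definition total_deriv (n : nat) (F : nat -> pexpr) (phi : pexpr) : pexpr :=
  fold_right (fun i acc => PAdd (PMul (pderiv i phi) (F i)) acc) (PC 0) (seq 0 n).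

(** * Networks satisfying the shape of (H1): a list of components
      Y + S_0 <-> U_1 -> Y + S_1 <-> ... <-> U_L -> Y + S_L. *)
Record chain := mkChain {
  ch_L : nat;
  ch_Y : nat;
  ch_S : nat -> nat;       (* substrates/products S_0, ..., S_L *)
  ch_U : nat -> nat        (* intermediates U_1, ..., U_L *)
}.

Definition dflt_chain : chain := mkChain 0%nat 0%nat (fun _ => 0%nat) (fun _ => 0%nat).
Definition chain_at (N : list chain) (c : nat) : chain := nth c N dflt_chain.

(** rate constants: for component c and step j (1 <= j <= L_c):
    rt_a c j : Y + S_{j-1} -> U_j,  rt_b c j : U_j -> Y + S_{j-1},
    rt_c c j : U_j -> Y + S_j *)
Record rates := mkRates {
  rt_a : nat -> nat -> R;
  rt_b : nat -> nat -> R;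
  rt_c : nat -> nat -> R
}.

Definition cplx1 (a : nat) : complex := fun i => if Nat.eqb i a then 1%nat else 0%nat.
Definition cplx2 (a b : nat) : complex :=
  fun i => ((if Nat.eqb i a then 1%nat else 0%nat) + (if Nat.eqb i b then 1%nat else 0%nat))%nat.

Definition chain_reactions (ch : chain) (c : nat) (k : rates) : list reaction :=
  flat_map (fun j =>
    [ mkReaction (cplx2 (ch_Y ch) (ch_S ch (j - 1))) (cplx1 (ch_U ch j)) (rt_a k c j);
      mkReaction (cplx1 (ch_U ch j)) (cplx2 (ch_Y ch) (ch_S ch (j - 1))) (rt_b k c j);
      mkReaction (cplx1 (ch_U ch j)) (cplx2 (ch_Y ch) (ch_S ch j)) (rt_c k c j) ])
    (seq 1 (ch_L ch)).

Definition network_reactions (N : list chain) (k : rates) : list reaction :=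
  flat_map (fun c => chain_reactions (chain_at N c) c k) (seq 0 (length N)).

Definition deriv_iter (n : nat) (N : list chain) (k : rates) (l : nat) (i : nat) : pexpr :=
  Nat.iter l (total_deriv n (mass_action n (network_reactions N k))) (PX i).

Definition positive_rates (N : list chain) (k : rates) : Prop :=
  forall c j, (c < length N)%nat -> (1 <= j <= ch_L (chain_at N c))%nat ->
    0 < rt_a k c j /\ 0 < rt_b k c j /\ 0 < rt_c k c j.

Definition chain_complexes (ch : chain) : list complex :=
  map (fun j => cplx2 (ch_Y ch) (ch_S ch j)) (seq 0 (S (ch_L ch))) ++
  map (fun j => cplx1 (ch_U ch j)) (seq 1 (ch_L ch)).

Definition is_intermediate (N : list chain) (i : nat) : Prop :=
  exists c j, (c < length N)%nat /\ (1 <= j <= ch_L (chain_at N c))%nat /\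
              ch_U (chain_at N c) j = i.

Definition H1 (n : nat) (N : list chain) : Prop :=
  (forall c, (c < length N)%nat ->
     let ch := chain_at N c in
     (1 <= ch_L ch)%nat /\
     (ch_Y ch < n)%nat /\
     (forall j, (j <= ch_L ch)%nat -> (ch_S ch j < n)%nat) /\
     (forall j, (1 <= j <= ch_L ch)%nat -> (ch_U ch j < n)%nat) /\
     (forall j, (j <= ch_L ch)%nat -> ch_S ch j <> ch_Y ch) /\
     (forall j j', (j <= ch_L ch)%nat -> (j' <= ch_L ch)%nat ->
        ch_S ch j = ch_S ch j' -> j = j')) /\
  (forall c j c' j', (c < length N)%nat -> (1 <= j <= ch_L (chain_at N c))%nat ->
     (c' < length N)%nat -> (1 <= j' <= ch_L (chain_at N c'))%nat ->
     ch_U (chain_at N c) j = ch_U (chain_at N c') j' -> c = c' /\ j = j') /\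
  (forall c j c', (c < length N)%nat -> (1 <= j <= ch_L (chain_at N c))%nat ->
     (c' < length N)%nat ->
     ch_U (chain_at N c) j <> ch_Y (chain_at N c') /\
     (forall j', (j' <= ch_L (chain_at N c'))%nat ->
        ch_U (chain_at N c) j <> ch_S (chain_at N c') j')) /\
  (forall c c', (c < length N)%nat -> (c' < length N)%nat -> c <> c' ->
     forall y y', In y (chain_complexes (chain_at N c)) ->
                  In y' (chain_complexes (chain_at N c')) -> y <> y').

(** Hypothesis (H2): a partition S^(0) ⊔ ... ⊔ S^(M) of the species 0..n-1, given by
    the part index p i, with M >= 2, nonempty parts, S^(0) = the intermediates. *)
Definition H2 (n : nat) (N : list chain) : Prop :=
  exists (M : nat) (p : nat -> nat),
    (2 <= M)%nat /\
    (forall i, (i < n)%nat -> (p i <= M)%nat) /\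
    (forall a, (a <= M)%nat -> exists i, (i < n)%nat /\ p i = a) /\
    (forall i, (i < n)%nat -> (p i = 0%nat <-> is_intermediate N i)) /\
    (forall c j, (c < length N)%nat -> (1 <= j <= ch_L (chain_at N c))%nat ->
       exists a, (1 <= a)%nat /\
         (forall j', (j' <= ch_L (chain_at N c))%nat -> p (ch_S (chain_at N c) j') = a) /\
         p (ch_Y (chain_at N c)) <> a).

Definition identifiable {A : Type} (n : nat) (N : list chain) (psi : rates -> A)
    (vars : list nat) (D : nat) : Prop :=
  forall k1 k2, positive_rates N k1 -> positive_rates N k2 ->
    (forall i, In i vars -> forall l, (1 <= l <= D)%nat ->
       forall x : nat -> R, peval x (deriv_iter n N k1 l i) = peval x (deriv_iter n N k2 l i)) ->
    psi k1 = psi k2.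

Definition two_chain_constants (c1 c2 L : nat) (k : rates) : list (R * R * R * R * R * R) :=
  map (fun j => (rt_a k c1 j, rt_b k c1 j, rt_c k c1 j, rt_a k c2 j, rt_b k c2 j, rt_c k c2 j))
      (seq 1 L).

(* At the point where the enzyme Y of the first chain has concentration 1 and every other
   species 0, every reaction monomial vanishes.  Hence the gradient and the Hessian of the
   iterated derivatives s_L^(l) at that point satisfy linear recursions in l, driven by the
   transposed Jacobian of the mass-action field and by the second derivatives of the
   binding monomials.  Going back along the first chain from S_L costs two derivatives per
   step and multiplies by a_t c_t > 0.  The first nonzero entries give c_L, a_L and
   b_L + c_L; Hessian entries of order 3 give a_t and b_t + c_t; the first nonzero
   derivative in U_t gives c_t.  The second chain consumes S_L = S~_0 in its first binding,
   so evaluating at Y~ gives a~_1 at order 1 and a~_m, b~_m + c~_m at order 2, while the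
   first nonzero derivative in V_m at Y separates b~_m from c~_m. *)

From Stdlib Require Import Reals List Arith Lia Lra FunctionalExtensionality.
Open Scope R_scope.

Definition lsum {A} (f : A -> R) (l : list A) : R :=
  fold_right (fun a acc => f a + acc) 0 l.

Lemma lsum_app {A} (f : A -> R) l1 l2 : lsum f (l1 ++ l2) = lsum f l1 + lsum f l2.
Proof. induction l1; simpl; [ring | rewrite IHl1; ring]. Qed.

Lemma lsum_flat_map {A B} (f : B -> R) (g : A -> list B) l :
  lsum f (flat_map g l) = lsum (fun a => lsum f (g a)) l.
Proof. induction l; simpl; [reflexivity | rewrite lsum_app, IHl; reflexivity]. Qed.

Lemma lsum_ext_in {A} (f g : A -> R) l :
  (forall a, In a l -> f a = g a) -> lsum f l = lsum g l.
Proof. induction l; simpl; intros H; [reflexivity | rewrite H, IHl; auto]. Qed.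

Lemma lsum_plus {A} (f g : A -> R) l : lsum (fun a => f a + g a) l = lsum f l + lsum g l.
Proof. induction l; simpl; [ring | rewrite IHl; ring]. Qed.

Lemma lsum_minus {A} (f g : A -> R) l : lsum (fun a => f a - g a) l = lsum f l - lsum g l.
Proof. induction l; simpl; [ring | rewrite IHl; ring]. Qed.

Lemma lsum_scal {A} c (f : A -> R) l : lsum (fun a => c * f a) l = c * lsum f l.
Proof. induction l; simpl; [ring | rewrite IHl; ring]. Qed.

Lemma lsum_zero {A} (f : A -> R) l : (forall a, In a l -> f a = 0) -> lsum f l = 0.
Proof. induction l; simpl; intros H; [reflexivity | rewrite H, IHl; auto; ring]. Qed.

Lemma lsum_swap {A B} (f : A -> B -> R) l1 l2 :
  lsum (fun a => lsum (fun b => f a b) l2) l1 = lsum (fun b => lsum (fun a => f a b) l1) l2.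
Proof.
  induction l1; simpl.
  - symmetry; apply lsum_zero; auto.
  - rewrite IHl1, <- lsum_plus; reflexivity.
Qed.

Lemma lsum_single {A} (f : A -> R) l a0 : NoDup l -> In a0 l ->
  (forall a, In a l -> a <> a0 -> f a = 0) -> lsum f l = f a0.
Proof.
  induction l as [|a l IH]; simpl; intros Hnd Hin H; [contradiction|].
  inversion Hnd; subst. destruct Hin as [<-|Hin].
  - rewrite lsum_zero; [ring|]. intros b Hb. apply H; auto. intros ->; contradiction.
  - rewrite H, IH; auto; [ring | intros ->; contradiction].
Qed.

Lemma lsum_seq_single (f : nat -> R) m len i0 : (m <= i0 < m + len)%nat ->
  (forall i, (m <= i < m + len)%nat -> i <> i0 -> f i = 0) -> lsum f (seq m len) = f i0.
Proof.
  intros Hi0 H. apply lsum_single; [apply seq_NoDup | apply in_seq; lia |].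
  intros i Hi. apply in_seq in Hi. auto.
Qed.

Lemma lsum_seq_zero (f : nat -> R) m len :
  (forall i, (m <= i < m + len)%nat -> f i = 0) -> lsum f (seq m len) = 0.
Proof. intros H. apply lsum_zero. intros i Hi. apply in_seq in Hi. auto. Qed.

Definition lprod (f : nat -> R) (l : list nat) : R := fold_right (fun a acc => f a * acc) 1 l.

Lemma lprod_mult f g l : lprod (fun i => f i * g i) l = lprod f l * lprod g l.
Proof. induction l; simpl; [ring | rewrite IHl; ring]. Qed.

Lemma lprod_one f l : (forall a, In a l -> f a = 1) -> lprod f l = 1.
Proof. induction l; simpl; intros H; auto. rewrite H, IHl; auto. ring. Qed.

Lemma lprod_single f l a0 : NoDup l -> In a0 l ->
  (forall a, In a l -> a <> a0 -> f a = 1) -> lprod f l = f a0.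
Proof.
  induction l as [|a l IH]; simpl; intros Hnd Hin H; [contradiction|].
  inversion Hnd; subst. destruct Hin as [<-|Hin].
  - rewrite lprod_one; [ring|]. intros b Hb. apply H; auto. intros ->; contradiction.
  - rewrite H, IH; auto; [ring | intros ->; contradiction].
Qed.

Lemma lprod_seq_single (f : nat -> R) len i0 : (i0 < len)%nat ->
  (forall i, (i < len)%nat -> i <> i0 -> f i = 1) -> lprod f (seq 0 len) = f i0.
Proof.
  intros Hi0 H. apply lprod_single; [apply seq_NoDup | apply in_seq; lia |].
  intros i Hi. apply in_seq in Hi. apply H. lia.
Qed.

Lemma pair_from_sum_and_combination x1 y1 x2 y2 p q : p <> q ->
  x1 + y1 = x2 + y2 -> x1 * p + y1 * q = x2 * p + y2 * q -> x1 = x2 /\ y1 = y2.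
Proof.
  intros Hpq Hs Hc. assert (E : (x1 - x2) * (p - q) = 0) by nra.
  apply Rmult_integral in E as [E|E]; [lra | exfalso; lra].
Qed.

(** * Polynomial calculus *)

Definition fupd (x : nat -> R) j t : nat -> R := fun i => if Nat.eqb i j then t else x i.

Lemma peval_ext x y p : (forall i, x i = y i) -> peval x p = peval y p.
Proof. intros H; induction p; simpl; auto; congruence. Qed.

Lemma pderiv_is_derivative p x j :
  derivable_pt_lim (fun t => peval (fupd x j t) p) (x j) (peval x (pderiv j p)).
Proof.
  assert (Hx : forall q, peval (fupd x j (x j)) q = peval x q).
  { intros q; apply peval_ext. intros i; unfold fupd.
    destruct (Nat.eqb_spec i j); subst; auto. }
  induction p; simpl.
  - apply derivable_pt_lim_const.
  - unfold fupd. destruct (Nat.eqb n j).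
    + apply derivable_pt_lim_id.
    + apply derivable_pt_lim_const.
  - exact (derivable_pt_lim_plus _ _ _ _ _ IHp1 IHp2).
  - pose proof (derivable_pt_lim_mult _ _ _ _ _ IHp1 IHp2) as H.
    simpl in H. unfold mult_fct in H. rewrite !Hx in H. exact H.
Qed.

Lemma peval_pderiv_ext p q : (forall x, peval x p = peval x q) ->
  forall j x, peval x (pderiv j p) = peval x (pderiv j q).
Proof.
  intros H j x. pose proof (pderiv_is_derivative q x j) as Hq.
  replace (fun t => peval (fupd x j t) q) with (fun t => peval (fupd x j t) p) in Hq
    by (apply functional_extensionality; auto).
  exact (uniqueness_limite _ _ _ _ (pderiv_is_derivative p x j) Hq).
Qed.

Lemma pderiv_comm p i j x :
  peval x (pderiv i (pderiv j p)) = peval x (pderiv j (pderiv i p)).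
Proof. revert i j; induction p; intros; simpl; try ring; rewrite IHp1, IHp2; ring. Qed.

Definition kron (a b : nat) : R := if Nat.eqb a b then 1 else 0.

Lemma kron_refl a : kron a a = 1.
Proof. unfold kron; rewrite Nat.eqb_refl; reflexivity. Qed.

Lemma kron_neq a b : a <> b -> kron a b = 0.
Proof. intros H; unfold kron; apply Nat.eqb_neq in H; rewrite H; reflexivity. Qed.

Lemma kron_mul_zero a b c d : (a = b -> c = d -> False) -> kron a b * kron c d = 0.
Proof.
  intros H; unfold kron.
  destruct (Nat.eqb_spec a b), (Nat.eqb_spec c d); try ring. exfalso; auto.
Qed.

Definition unit_at (E : nat) : nat -> R := fun i => kron i E.

Lemma peval_monomial n y x : peval x (monomial n y) = lprod (fun i => x i ^ y i) (seq 0 n).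
Proof.
  unfold monomial. induction (seq 0 n); simpl; auto.
  rewrite IHl. f_equal. induction (y a); simpl; auto. rewrite IHn0; ring.
Qed.

Lemma peval_monomial_cplx1 n u x : (u < n)%nat -> peval x (monomial n (cplx1 u)) = x u.
Proof.
  intros Hu. rewrite peval_monomial, (lprod_seq_single _ _ u Hu).
  - unfold cplx1; rewrite Nat.eqb_refl; simpl; ring.
  - intros i _ Hi. unfold cplx1. apply Nat.eqb_neq in Hi. rewrite Hi. reflexivity.
Qed.

Lemma peval_monomial_cplx2 n a b x : (a < n)%nat -> (b < n)%nat -> a <> b ->
  peval x (monomial n (cplx2 a b)) = x a * x b.
Proof.
  intros Ha Hb Hab. rewrite peval_monomial.
  transitivity (lprod (fun i => x i ^ cplx1 a i * x i ^ cplx1 b i) (seq 0 n)).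
  { f_equal. apply functional_extensionality; intros i. apply pow_add. }
  rewrite lprod_mult. f_equal.
  - rewrite <- (peval_monomial_cplx1 n a x Ha), peval_monomial; reflexivity.
  - rewrite <- (peval_monomial_cplx1 n b x Hb), peval_monomial; reflexivity.
Qed.

Definition dmono n i y x := peval x (pderiv i (monomial n y)).
Definition ddmono n i j y x := peval x (pderiv j (pderiv i (monomial n y))).

Lemma dmono_cplx1 n i u x : (u < n)%nat -> dmono n i (cplx1 u) x = kron u i.
Proof.
  intros Hu. unfold dmono. rewrite (peval_pderiv_ext _ (PX u)); [reflexivity|].
  intros y; apply peval_monomial_cplx1; auto.
Qed.

Lemma dmono_cplx2 n i a b x : (a < n)%nat -> (b < n)%nat -> a <> b ->
  dmono n i (cplx2 a b) x = kron a i * x b + x a * kron b i.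
Proof.
  intros Ha Hb Hab. unfold dmono. rewrite (peval_pderiv_ext _ (PMul (PX a) (PX b))).
  - reflexivity.
  - intros y; apply peval_monomial_cplx2; auto.
Qed.

Lemma ddmono_cplx1 n i j u x : (u < n)%nat -> ddmono n i j (cplx1 u) x = 0.
Proof.
  intros Hu. unfold ddmono. rewrite (peval_pderiv_ext _ (pderiv i (PX u))); [reflexivity|].
  apply peval_pderiv_ext. intros y; apply peval_monomial_cplx1; auto.
Qed.

Lemma ddmono_cplx2 n i j a b x : (a < n)%nat -> (b < n)%nat -> a <> b ->
  ddmono n i j (cplx2 a b) x = kron a i * kron b j + kron a j * kron b i.
Proof.
  intros Ha Hb Hab. unfold ddmono.
  rewrite (peval_pderiv_ext _ (pderiv i (PMul (PX a) (PX b)))).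
  - simpl. unfold kron. ring.
  - apply peval_pderiv_ext. intros y; apply peval_monomial_cplx2; auto.
Qed.

(** * The total derivative at a point where every reaction monomial vanishes *)

Definition reaction_dot n (r : reaction) (v : nat -> R) : R :=
  lsum (fun i => (INR (r_tgt r i) - INR (r_src r i)) * v i) (seq 0 n).

Lemma lsum_cplx1 n u v : (u < n)%nat -> lsum (fun i => INR (cplx1 u i) * v i) (seq 0 n) = v u.
Proof.
  intros Hu. rewrite (lsum_seq_single _ 0 n u); [| lia |].
  - unfold cplx1; rewrite Nat.eqb_refl; simpl; ring.
  - intros i _ Hi. unfold cplx1. apply Nat.eqb_neq in Hi. rewrite Hi. simpl; ring.
Qed.

Lemma lsum_cplx2 n a b v : (a < n)%nat -> (b < n)%nat ->
  lsum (fun i => INR (cplx2 a b i) * v i) (seq 0 n) = v a + v b.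
Proof.
  intros Ha Hb. rewrite <- (lsum_cplx1 n a v), <- (lsum_cplx1 n b v), <- lsum_plus by auto.
  apply lsum_ext_in; intros i _. unfold cplx2, cplx1. rewrite plus_INR. ring.
Qed.

Lemma reaction_dot_split n r v : reaction_dot n r v =
  lsum (fun i => INR (r_tgt r i) * v i) (seq 0 n) - lsum (fun i => INR (r_src r i) * v i) (seq 0 n).
Proof. unfold reaction_dot. rewrite <- lsum_minus. apply lsum_ext_in; intros; ring. Qed.

Lemma reaction_dot_bind n a b u rate v : (a < n)%nat -> (b < n)%nat -> (u < n)%nat ->
  reaction_dot n (mkReaction (cplx2 a b) (cplx1 u) rate) v = v u - v a - v b.
Proof.
  intros. rewrite reaction_dot_split. simpl.
  rewrite lsum_cplx1, lsum_cplx2 by auto. ring.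
Qed.

Lemma reaction_dot_release n u a b rate v : (a < n)%nat -> (b < n)%nat -> (u < n)%nat ->
  reaction_dot n (mkReaction (cplx1 u) (cplx2 a b) rate) v = v a + v b - v u.
Proof.
  intros. rewrite reaction_dot_split. simpl.
  rewrite lsum_cplx1, lsum_cplx2 by auto. reflexivity.
Qed.

Definition grad (x : nat -> R) (phi : pexpr) : nat -> R := fun i => peval x (pderiv i phi).

(* [jacT n rs x j v] is the j-th entry of J(x)^T v, where J is the Jacobian of the mass-action
   field of [rs]; [hess_sum] contracts [g] with the Hessians of the reaction monomials instead. *)
Definition jacT n (rs : list reaction) x j (v : nat -> R) : R :=
  lsum (fun r => r_rate r * dmono n j (r_src r) x * reaction_dot n r v) rs.

Definition hess_sum n (rs : list reaction) x i j (g : reaction -> R) : R :=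
  lsum (fun r => r_rate r * ddmono n i j (r_src r) x * g r) rs.

Definition monomials_vanish n (rs : list reaction) x : Prop :=
  forall r, In r rs -> peval x (monomial n (r_src r)) = 0.

Lemma jacT_ext n rs x j v w : (forall i, v i = w i) -> jacT n rs x j v = jacT n rs x j w.
Proof.
  intros H. unfold jacT, reaction_dot. apply lsum_ext_in. intros r _.
  f_equal. apply lsum_ext_in. intros i _. rewrite H; auto.
Qed.

Lemma jacT_zero n rs x j : jacT n rs x j (fun _ => 0) = 0.
Proof.
  unfold jacT. apply lsum_zero. intros r _. unfold reaction_dot.
  rewrite lsum_zero; [ring | intros; ring].
Qed.

Definition total_deriv_on (F : nat -> pexpr) (phi : pexpr) (l : list nat) : pexpr :=
  fold_right (fun i acc => PAdd (PMul (pderiv i phi) (F i)) acc) (PC 0) l.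

Lemma peval_mass_action n rs i x : peval x (mass_action n rs i) =
  lsum (fun r => r_rate r * (INR (r_tgt r i) - INR (r_src r i))
                 * peval x (monomial n (r_src r))) rs.
Proof. induction rs; simpl; auto. rewrite IHrs; reflexivity. Qed.

Lemma peval_pderiv_mass_action n rs i j x : peval x (pderiv j (mass_action n rs i)) =
  lsum (fun r => r_rate r * (INR (r_tgt r i) - INR (r_src r i)) * dmono n j (r_src r) x) rs.
Proof. induction rs; simpl; auto. rewrite IHrs; unfold dmono; ring. Qed.

Lemma peval_pderiv2_mass_action n rs i j j' x :
  peval x (pderiv j' (pderiv j (mass_action n rs i))) =
  lsum (fun r => r_rate r * (INR (r_tgt r i) - INR (r_src r i)) * ddmono n j j' (r_src r) x) rs.
Proof. induction rs; simpl; auto. rewrite IHrs; unfold ddmono; ring. Qed.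

Lemma peval_pderiv_total_deriv_on F phi l j x : peval x (pderiv j (total_deriv_on F phi l)) =
  lsum (fun i => peval x (pderiv j (pderiv i phi)) * peval x (F i)
               + peval x (pderiv i phi) * peval x (pderiv j (F i))) l.
Proof. induction l; simpl; [ring | rewrite IHl; ring]. Qed.

Lemma peval_pderiv2_total_deriv_on F phi l j j' x :
  peval x (pderiv j' (pderiv j (total_deriv_on F phi l))) =
  lsum (fun i => peval x (pderiv j' (pderiv j (pderiv i phi))) * peval x (F i)
               + peval x (pderiv j (pderiv i phi)) * peval x (pderiv j' (F i))
               + peval x (pderiv j' (pderiv i phi)) * peval x (pderiv j (F i))
               + peval x (pderiv i phi) * peval x (pderiv j' (pderiv j (F i)))) l.
Proof. induction l; simpl; [ring | rewrite IHl; ring]. Qed.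

Lemma pderiv_total_deriv n rs phi j x : monomials_vanish n rs x ->
  peval x (pderiv j (total_deriv n (mass_action n rs) phi)) = jacT n rs x j (grad x phi).
Proof.
  intros H0. unfold total_deriv. fold (total_deriv_on (mass_action n rs) phi (seq 0 n)).
  rewrite peval_pderiv_total_deriv_on.
  rewrite (lsum_ext_in _ (fun i => lsum (fun r => peval x (pderiv i phi) *
      (r_rate r * (INR (r_tgt r i) - INR (r_src r i)) * dmono n j (r_src r) x)) rs)).
  2:{ intros i _. rewrite peval_mass_action, peval_pderiv_mass_action, lsum_zero.
      - rewrite <- lsum_scal. ring.
      - intros r Hr. rewrite H0; auto. ring. }
  rewrite lsum_swap. apply lsum_ext_in. intros r _. unfold reaction_dot, grad.
  rewrite <- lsum_scal. apply lsum_ext_in. intros; ring.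
Qed.

Lemma pderiv2_total_deriv n rs phi i j x : monomials_vanish n rs x ->
  peval x (pderiv j (pderiv i (total_deriv n (mass_action n rs) phi))) =
    hess_sum n rs x i j (fun r => reaction_dot n r (grad x phi))
  + jacT n rs x j (grad x (pderiv i phi))
  + jacT n rs x i (grad x (pderiv j phi)).
Proof.
  intros H0. unfold total_deriv. fold (total_deriv_on (mass_action n rs) phi (seq 0 n)).
  rewrite peval_pderiv2_total_deriv_on.
  rewrite (lsum_ext_in _ (fun l => lsum (fun r =>
        r_rate r * (INR (r_tgt r l) - INR (r_src r l)) *
        (peval x (pderiv l phi) * ddmono n i j (r_src r) x
         + peval x (pderiv i (pderiv l phi)) * dmono n j (r_src r) x
         + peval x (pderiv j (pderiv l phi)) * dmono n i (r_src r) x)) rs)).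
  2:{ intros l _. rewrite peval_mass_action, !peval_pderiv_mass_action,
        peval_pderiv2_mass_action, (lsum_zero _ rs).
      - rewrite Rmult_0_r, Rplus_0_l, <- !lsum_scal, <- !lsum_plus.
        apply lsum_ext_in; intros; ring.
      - intros r Hr. rewrite H0; auto. ring. }
  rewrite lsum_swap. unfold hess_sum, jacT. rewrite <- !lsum_plus.
  apply lsum_ext_in. intros r _. unfold reaction_dot, grad.
  rewrite <- !lsum_scal, <- !lsum_plus. apply lsum_ext_in. intros l _.
  rewrite (pderiv_comm phi i l), (pderiv_comm phi j l). ring.
Qed.

(** * Networks of chains *)

Section Network.
Variables (n : nat) (N : list chain) (k : rates).

Definition Yc c := ch_Y (chain_at N c).
Definition Sc c := ch_S (chain_at N c).
Definition Uc c := ch_U (chain_at N c).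
Definition Lc c := ch_L (chain_at N c).

Definition rxn_bind c j := mkReaction (cplx2 (Yc c) (Sc c (j - 1))) (cplx1 (Uc c j)) (rt_a k c j).
Definition rxn_unbind c j := mkReaction (cplx1 (Uc c j)) (cplx2 (Yc c) (Sc c (j - 1))) (rt_b k c j).
Definition rxn_cat c j := mkReaction (cplx1 (Uc c j)) (cplx2 (Yc c) (Sc c j)) (rt_c k c j).

Definition step_sum (g : reaction -> R) c j :=
  g (rxn_bind c j) + g (rxn_unbind c j) + g (rxn_cat c j).

Local Notation rs := (network_reactions N k).

Lemma lsum_network_reactions g :
  lsum g rs = lsum (fun c => lsum (step_sum g c) (seq 1 (Lc c))) (seq 0 (length N)).
Proof.
  unfold network_reactions. rewrite lsum_flat_map. apply lsum_ext_in. intros c _.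
  unfold chain_reactions. rewrite lsum_flat_map. apply lsum_ext_in. intros j _.
  unfold step_sum, rxn_bind, rxn_unbind, rxn_cat, Yc, Sc, Uc; simpl. ring.
Qed.

Lemma lsum_network_single g c0 j0 : (c0 < length N)%nat -> (1 <= j0 <= Lc c0)%nat ->
  (forall c j, (c < length N)%nat -> (1 <= j <= Lc c)%nat -> (c <> c0 \/ j <> j0) ->
     step_sum g c j = 0) ->
  lsum g rs = step_sum g c0 j0.
Proof.
  intros Hc Hj H. rewrite lsum_network_reactions, (lsum_seq_single _ 0 _ c0); [| lia |].
  - apply lsum_seq_single; [lia |]. intros j Hj' Hne. apply H; auto. lia.
  - intros c Hc' Hne. apply lsum_seq_zero. intros j Hj'. apply H; auto; lia.
Qed.

Lemma lsum_network_zero g :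
  (forall c j, (c < length N)%nat -> (1 <= j <= Lc c)%nat -> step_sum g c j = 0) ->
  lsum g rs = 0.
Proof.
  intros H. rewrite lsum_network_reactions. apply lsum_seq_zero. intros c Hc.
  apply lsum_seq_zero. intros j Hj. apply H; lia.
Qed.

Lemma in_network_reactions r : In r rs ->
  exists c j, (c < length N)%nat /\ (1 <= j <= Lc c)%nat /\
    (r = rxn_bind c j \/ r = rxn_unbind c j \/ r = rxn_cat c j).
Proof.
  unfold network_reactions. intros H. apply in_flat_map in H as [c [Hc H]].
  apply in_seq in Hc. unfold chain_reactions in H. apply in_flat_map in H as [j [Hj H]].
  apply in_seq in Hj. exists c, j. split; [lia|]. split; [unfold Lc; lia|].
  simpl in H. unfold rxn_bind, rxn_unbind, rxn_cat, Yc, Sc, Uc. intuition.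
Qed.

Hypothesis HN : H1 n N.

Section ValidChain.
Variable c : nat.
Hypothesis Hc : (c < length N)%nat.

Lemma chain_L_pos : (1 <= Lc c)%nat.
Proof. apply (proj1 HN c Hc). Qed.

Lemma enzyme_lt : (Yc c < n)%nat.
Proof. apply (proj1 HN c Hc). Qed.

Lemma substrate_lt j : (j <= Lc c)%nat -> (Sc c j < n)%nat.
Proof. apply (proj1 HN c Hc). Qed.

Lemma intermediate_lt j : (1 <= j <= Lc c)%nat -> (Uc c j < n)%nat.
Proof. apply (proj1 HN c Hc). Qed.

Lemma substrate_neq_enzyme j : (j <= Lc c)%nat -> Sc c j <> Yc c.
Proof. apply (proj1 HN c Hc). Qed.

Lemma substrate_inj j j' : (j <= Lc c)%nat -> (j' <= Lc c)%nat -> Sc c j = Sc c j' -> j = j'.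
Proof. apply (proj1 HN c Hc). Qed.

End ValidChain.

Lemma intermediate_inj c j c' j' : (c < length N)%nat -> (1 <= j <= Lc c)%nat ->
  (c' < length N)%nat -> (1 <= j' <= Lc c')%nat -> Uc c j = Uc c' j' -> c = c' /\ j = j'.
Proof. apply HN. Qed.

Lemma intermediate_neq_enzyme c j c' : (c < length N)%nat -> (1 <= j <= Lc c)%nat ->
  (c' < length N)%nat -> Uc c j <> Yc c'.
Proof. intros. apply (proj1 (proj2 (proj2 HN)) c j c'); auto. Qed.

Lemma intermediate_neq_substrate c j c' j' : (c < length N)%nat -> (1 <= j <= Lc c)%nat ->
  (c' < length N)%nat -> (j' <= Lc c')%nat -> Uc c j <> Sc c' j'.
Proof. intros. apply (proj1 (proj2 (proj2 HN)) c j c'); auto. Qed.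

Lemma bind_complex_unique c m c' j : (c < length N)%nat -> (c' < length N)%nat ->
  (m <= Lc c)%nat -> (j <= Lc c')%nat ->
  (Yc c' = Yc c /\ Sc c' j = Sc c m) \/ (Yc c' = Sc c m /\ Sc c' j = Yc c) -> c' = c /\ j = m.
Proof.
  intros Hc Hc' Hm Hj H. destruct (Nat.eq_dec c' c) as [->|Hne].
  - destruct H as [[_ H]|[H _]].
    + split; [reflexivity | apply (substrate_inj c Hc); auto].
    + exfalso. apply (substrate_neq_enzyme c Hc m Hm). auto.
  - exfalso. apply (proj2 (proj2 (proj2 HN)) c' c Hc' Hc Hne
                     (cplx2 (Yc c') (Sc c' j)) (cplx2 (Yc c) (Sc c m))).
    1, 2: apply in_or_app; left; apply in_map_iff; eexists; split; [reflexivity|];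
          apply in_seq; unfold Lc in *; lia.
    destruct H as [[-> ->]|[-> ->]]; [reflexivity|].
    apply functional_extensionality; intros i; unfold cplx2; lia.
Qed.

Lemma kron_bind_pair_zero c j E : (c < length N)%nat -> (1 <= j <= Lc c)%nat ->
  kron (Yc c) E * kron (Sc c (j - 1)) E = 0.
Proof.
  intros Hc Hj. apply kron_mul_zero. intros HY HS.
  apply (substrate_neq_enzyme c Hc (j - 1)); [lia | congruence].
Qed.

Lemma bind_src_indicator c m c' j : (c < length N)%nat -> (m <= Lc c)%nat ->
  (c' < length N)%nat -> (1 <= j <= Lc c')%nat ->
  kron (Yc c') (Sc c m) * kron (Sc c' (j - 1)) (Yc c)
  + kron (Yc c') (Yc c) * kron (Sc c' (j - 1)) (Sc c m) = kron c' c * kron j (S m).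
Proof.
  intros Hc Hm Hc' Hj.
  destruct (Nat.eq_dec c' c) as [->|Hne]; [destruct (Nat.eq_dec j (S m)) as [->|Hne']|].
  - replace (S m - 1)%nat with m by lia.
    rewrite (kron_neq (Yc c) (Sc c m)), !kron_refl; [ring|].
    intros E. apply (substrate_neq_enzyme c Hc m Hm). auto.
  - rewrite (kron_neq j), !kron_mul_zero; auto; [ring | |];
      intros E1 E2; destruct (bind_complex_unique c m c (j - 1)); auto; lia.
  - rewrite (kron_neq c'), !kron_mul_zero; auto; [ring | |];
      intros E1 E2; destruct (bind_complex_unique c m c' (j - 1)); auto; lia.
Qed.

Lemma monomials_vanish_at_enzyme c : (c < length N)%nat ->
  monomials_vanish n rs (unit_at (Yc c)).
Proof.
  intros Hc r Hr. destruct (in_network_reactions r Hr) as [c' [j [Hc' [Hj Hr']]]].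
  destruct Hr' as [->|[->| ->]]; simpl.
  - rewrite peval_monomial_cplx2; auto using enzyme_lt, substrate_lt with arith.
    + apply kron_bind_pair_zero; auto.
    + apply substrate_lt; auto; lia.
    + apply not_eq_sym, substrate_neq_enzyme; auto; lia.
  - rewrite peval_monomial_cplx1 by (apply intermediate_lt; auto).
    apply kron_neq, (intermediate_neq_enzyme c' j c); auto.
  - rewrite peval_monomial_cplx1 by (apply intermediate_lt; auto).
    apply kron_neq, (intermediate_neq_enzyme c' j c); auto.
Qed.

Section Step.
Variables (c j : nat).
Hypothesis Hc : (c < length N)%nat.
Hypothesis Hj : (1 <= j <= Lc c)%nat.

Let HY := enzyme_lt c Hc.
Let HS : (Sc c (j - 1) < n)%nat := substrate_lt c Hc (j - 1) ltac:(lia).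
Let HS' : (Sc c j < n)%nat := substrate_lt c Hc j ltac:(lia).
Let HU := intermediate_lt c Hc j Hj.
Let HSY : Yc c <> Sc c (j - 1) :=
  not_eq_sym (substrate_neq_enzyme c Hc (j - 1) ltac:(lia)).

Lemma step_jacT x i v :
  step_sum (fun r => r_rate r * dmono n i (r_src r) x * reaction_dot n r v) c j =
    rt_a k c j * (kron (Yc c) i * x (Sc c (j - 1)) + x (Yc c) * kron (Sc c (j - 1)) i)
      * (v (Uc c j) - v (Yc c) - v (Sc c (j - 1)))
  + rt_b k c j * kron (Uc c j) i * (v (Yc c) + v (Sc c (j - 1)) - v (Uc c j))
  + rt_c k c j * kron (Uc c j) i * (v (Yc c) + v (Sc c j) - v (Uc c j)).
Proof.
  unfold step_sum, rxn_bind, rxn_unbind, rxn_cat. simpl r_src; simpl r_rate.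
  rewrite dmono_cplx2, !dmono_cplx1, reaction_dot_bind, !reaction_dot_release; auto.
Qed.

Lemma reaction_dot_rxn_bind v :
  reaction_dot n (rxn_bind c j) v = v (Uc c j) - v (Yc c) - v (Sc c (j - 1)).
Proof. apply reaction_dot_bind; auto. Qed.

Lemma step_hess_sum x i i' g :
  step_sum (fun r => r_rate r * ddmono n i i' (r_src r) x * g r) c j =
    rt_a k c j * (kron (Yc c) i * kron (Sc c (j - 1)) i' + kron (Yc c) i' * kron (Sc c (j - 1)) i)
      * g (rxn_bind c j).
Proof.
  unfold step_sum. cbv beta.
  change (r_src (rxn_unbind c j)) with (cplx1 (Uc c j)).
  change (r_src (rxn_cat c j)) with (cplx1 (Uc c j)).
  change (r_src (rxn_bind c j)) with (cplx2 (Yc c) (Sc c (j - 1))).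
  change (r_rate (rxn_bind c j)) with (rt_a k c j).
  rewrite ddmono_cplx2, !ddmono_cplx1 by auto. ring.
Qed.

End Step.

Lemma jacT_intermediate c m x v : (c < length N)%nat -> (1 <= m <= Lc c)%nat ->
  jacT n rs x (Uc c m) v = rt_b k c m * (v (Yc c) + v (Sc c (m - 1)) - v (Uc c m))
                         + rt_c k c m * (v (Yc c) + v (Sc c m) - v (Uc c m)).
Proof.
  intros Hc Hm. unfold jacT. rewrite (lsum_network_single _ c m Hc Hm).
  - rewrite step_jacT, kron_refl, (kron_neq (Yc c)), (kron_neq (Sc c (m - 1))); auto; [ring | |].
    + intros E; apply (intermediate_neq_substrate c m c (m - 1)); auto; lia.
    + intros E; apply (intermediate_neq_enzyme c m c); auto.
  - intros c' j Hc' Hj Hne.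
    rewrite step_jacT, (kron_neq (Yc c')), (kron_neq (Sc c' (j - 1))), (kron_neq (Uc c' j));
      auto; [ring | | |].
    + intros E. destruct (intermediate_inj c' j c m); auto. lia.
    + intros E; apply (intermediate_neq_substrate c m c' (j - 1)); auto; lia.
    + intros E; apply (intermediate_neq_enzyme c m c'); auto.
Qed.

Lemma step_jacT_substrate c m c' j v : (c < length N)%nat -> (m <= Lc c)%nat ->
  (c' < length N)%nat -> (1 <= j <= Lc c')%nat ->
  step_sum (fun r => r_rate r * dmono n (Sc c m) (r_src r) (unit_at (Yc c)) * reaction_dot n r v)
    c' j
  = kron c' c * kron j (S m) * rt_a k c' j * (v (Uc c' j) - v (Yc c') - v (Sc c' (j - 1))).
Proof.
  intros. rewrite step_jacT by auto. unfold unit_at.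
  rewrite bind_src_indicator, (kron_neq (Uc c' j)) by auto using intermediate_neq_substrate.
  ring.
Qed.

Lemma jacT_substrate c m v : (c < length N)%nat -> (m < Lc c)%nat ->
  jacT n rs (unit_at (Yc c)) (Sc c m) v
  = rt_a k c (S m) * (v (Uc c (S m)) - v (Yc c) - v (Sc c m)).
Proof.
  intros Hc Hm. unfold jacT. rewrite (lsum_network_single _ c (S m)); auto; [|lia|].
  - rewrite step_jacT_substrate, !kron_refl; auto; [|lia|lia].
    replace (S m - 1)%nat with m by lia. ring.
  - intros c' j Hc' Hj Hne. rewrite step_jacT_substrate; auto; [|lia].
    destruct Hne as [Hne|Hne]; [rewrite (kron_neq c' c Hne) | rewrite (kron_neq j (S m) Hne)]; ring.
Qed.

Lemma jacT_last_substrate c v : (c < length N)%nat ->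
  jacT n rs (unit_at (Yc c)) (Sc c (Lc c)) v = 0.
Proof.
  intros Hc. unfold jacT. apply lsum_network_zero. intros c' j Hc' Hj.
  rewrite step_jacT_substrate by auto.
  destruct (Nat.eq_dec c' c) as [->|Hne]; [rewrite (kron_neq j) by lia | rewrite kron_neq by auto];
    ring.
Qed.

Lemma jacT_enzyme c v : (c < length N)%nat -> jacT n rs (unit_at (Yc c)) (Yc c) v = 0.
Proof.
  intros Hc. unfold jacT. apply lsum_network_zero. intros c' j Hc' Hj.
  rewrite step_jacT by auto. unfold unit_at.
  rewrite kron_bind_pair_zero, (kron_neq (Uc c' j)) by auto using intermediate_neq_enzyme.
  ring.
Qed.

Lemma hess_sum_sym x i i' g : hess_sum n rs x i i' g = hess_sum n rs x i' i g.
Proof.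
  unfold hess_sum, ddmono. apply lsum_ext_in; intros r _. rewrite pderiv_comm. reflexivity.
Qed.

Lemma hess_sum_intermediate c m x i g : (c < length N)%nat -> (1 <= m <= Lc c)%nat ->
  hess_sum n rs x (Uc c m) i g = 0.
Proof.
  intros Hc Hm. unfold hess_sum. apply lsum_network_zero. intros c' j Hc' Hj.
  rewrite step_hess_sum, (kron_neq (Yc c') (Uc c m)), (kron_neq (Sc c' (j - 1)) (Uc c m));
    auto; [ring | |].
  - intros E; apply (intermediate_neq_substrate c m c' (j - 1)); auto; lia.
  - intros E; apply (intermediate_neq_enzyme c m c'); auto.
Qed.

Lemma hess_sum_diag x E g : hess_sum n rs x E E g = 0.
Proof.
  unfold hess_sum. apply lsum_network_zero. intros c' j Hc' Hj.
  rewrite step_hess_sum, !kron_bind_pair_zero by auto. ring.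
Qed.

Lemma hess_sum_same_part (p : nat -> nat) x i i' g :
  (forall c j, (c < length N)%nat -> (j <= Lc c)%nat -> p (Sc c j) <> p (Yc c)) ->
  p i = p i' -> hess_sum n rs x i i' g = 0.
Proof.
  intros Hp Hii'. unfold hess_sum. apply lsum_network_zero. intros c' j Hc' Hj.
  rewrite step_hess_sum by auto.
  rewrite (kron_mul_zero (Yc c') i), (kron_mul_zero (Yc c') i'); [ring | |];
    (intros E1 E2; apply (Hp c' (j - 1)%nat); [exact Hc' | lia | congruence]).
Qed.

Lemma step_hess_enzyme_substrate c m x g c' j : (c < length N)%nat -> (m <= Lc c)%nat ->
  (c' < length N)%nat -> (1 <= j <= Lc c')%nat ->
  step_sum (fun r => r_rate r * ddmono n (Yc c) (Sc c m) (r_src r) x * g r) c' j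
  = kron c' c * kron j (S m) * rt_a k c' j * g (rxn_bind c' j).
Proof.
  intros. rewrite step_hess_sum, Rplus_comm, bind_src_indicator by auto. ring.
Qed.

Lemma hess_sum_enzyme_substrate c m x g : (c < length N)%nat -> (m < Lc c)%nat ->
  hess_sum n rs x (Yc c) (Sc c m) g = rt_a k c (S m) * g (rxn_bind c (S m)).
Proof.
  intros Hc Hm. unfold hess_sum. rewrite (lsum_network_single _ c (S m)); auto; [|lia|].
  - rewrite step_hess_enzyme_substrate, !kron_refl; auto; [ring | lia | lia].
  - intros c' j Hc' Hj Hne. rewrite step_hess_enzyme_substrate; auto; [|lia].
    destruct Hne as [Hne|Hne]; [rewrite (kron_neq c' c Hne) | rewrite (kron_neq j (S m) Hne)]; ring.
Qed.

Lemma hess_sum_enzyme_last_substrate c x g : (c < length N)%nat ->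
  hess_sum n rs x (Yc c) (Sc c (Lc c)) g = 0.
Proof.
  intros Hc. unfold hess_sum. apply lsum_network_zero. intros c' j Hc' Hj.
  rewrite step_hess_enzyme_substrate by auto.
  destruct (Nat.eq_dec c' c) as [->|Hne]; [rewrite (kron_neq j) by lia | rewrite kron_neq by auto];
    ring.
Qed.

Definition deriv_grad l o E : nat -> R := grad (unit_at E) (deriv_iter n N k l o).
Definition deriv_hess l o E i : nat -> R := grad (unit_at E) (pderiv i (deriv_iter n N k l o)).

Lemma deriv_grad_zero o E j : deriv_grad 0 o E j = kron o j.
Proof. reflexivity. Qed.

Lemma deriv_grad_succ l o c j : (c < length N)%nat ->
  deriv_grad (S l) o (Yc c) j = jacT n rs (unit_at (Yc c)) j (deriv_grad l o (Yc c)).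
Proof. intros Hc. apply pderiv_total_deriv, monomials_vanish_at_enzyme, Hc. Qed.

Lemma deriv_hess_succ l o c i j : (c < length N)%nat ->
  deriv_hess (S l) o (Yc c) i j =
    hess_sum n rs (unit_at (Yc c)) i j (fun r => reaction_dot n r (deriv_grad l o (Yc c)))
  + jacT n rs (unit_at (Yc c)) j (deriv_hess l o (Yc c) i)
  + jacT n rs (unit_at (Yc c)) i (deriv_hess l o (Yc c) j).
Proof. intros Hc. apply pderiv2_total_deriv, monomials_vanish_at_enzyme, Hc. Qed.

Lemma deriv_hess_one o c i j : (c < length N)%nat ->
  deriv_hess 1 o (Yc c) i j =
    hess_sum n rs (unit_at (Yc c)) i j (fun r => reaction_dot n r (kron o)).
Proof.
  intros Hc. rewrite deriv_hess_succ by auto.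
  rewrite !(jacT_ext _ _ _ _ (deriv_hess 0 o (Yc c) _) (fun _ => 0)), !jacT_zero by reflexivity.
  rewrite !Rplus_0_r. reflexivity.
Qed.

End Network.

Lemma H2_partition n N c0 : H1 n N -> H2 n N -> (c0 < length N)%nat ->
  exists p : nat -> nat,
    (forall c j, (c < length N)%nat -> (j <= Lc N c)%nat -> p (Sc N c j) <> p (Yc N c)) /\
    (forall i j, (i <= Lc N c0)%nat -> (j <= Lc N c0)%nat -> p (Sc N c0 i) = p (Sc N c0 j)).
Proof.
  intros HN1 [M [p [_ [_ [_ [_ Hp]]]]]] Hc0. exists p. split.
  - intros c j Hc Hj. pose proof (chain_L_pos n N HN1 c Hc).
    destruct (Hp c 1%nat Hc) as [a [_ [Ha1 Ha2]]]; [unfold Lc in *; lia|].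
    unfold Sc, Yc. rewrite Ha1; auto.
  - intros i j Hi Hj. pose proof (chain_L_pos n N HN1 c0 Hc0).
    destruct (Hp c0 1%nat Hc0) as [a [_ [Ha1 _]]]; [unfold Lc in *; lia|].
    unfold Sc. rewrite !Ha1; auto.
Qed.

(** * The two chains [Y + S_0 -> ... -> Y + S_L] and [Y~ + S_L -> ... -> Y~ + S_0] *)

Section TwoChains.
Variables (n : nat) (N : list chain) (c1 c2 L : nat).
Hypothesis HN1 : H1 n N.
Hypothesis HN2 : H2 n N.
Hypothesis Hc1 : (c1 < length N)%nat.
Hypothesis Hc2 : (c2 < length N)%nat.
Hypothesis HL : (1 <= L)%nat.
Hypothesis HL1 : Lc N c1 = L.
Hypothesis HL2 : Lc N c2 = L.
Hypothesis HS2 : forall i, (i <= L)%nat -> Sc N c2 i = Sc N c1 (L - i).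

Local Notation Y1 := (Yc N c1).
Local Notation S1 := (Sc N c1).
Local Notation U1 := (Uc N c1).
Local Notation Y2 := (Yc N c2).
Local Notation S2 := (Sc N c2).
Local Notation U2 := (Uc N c2).
Local Notation o := (Sc N c1 L).

Lemma S1_inj i j : (i <= L)%nat -> (j <= L)%nat -> S1 i = S1 j -> i = j.
Proof. rewrite <- HL1. apply (substrate_inj n N HN1 c1 Hc1). Qed.

Lemma S1_neq_Y1 i : (i <= L)%nat -> S1 i <> Y1.
Proof. rewrite <- HL1. apply (substrate_neq_enzyme n N HN1 c1 Hc1). Qed.

Lemma U1_neq_S1 t i : (1 <= t <= L)%nat -> (i <= L)%nat -> U1 t <> S1 i.
Proof. intros. apply (intermediate_neq_substrate n N); auto; lia. Qed.

Lemma U2_neq_S1 t i : (1 <= t <= L)%nat -> (i <= L)%nat -> U2 t <> S1 i.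
Proof. intros. apply (intermediate_neq_substrate n N); auto; lia. Qed.

Lemma Y2_neq_S1 i : (i <= L)%nat -> Y2 <> S1 i.
Proof.
  intros Hi E. apply (substrate_neq_enzyme n N HN1 c2 Hc2 (L - i)); [lia|].
  rewrite HS2, E by lia. f_equal. lia.
Qed.

Lemma o_eq_S2_0 : o = S2 0.
Proof. rewrite HS2 by lia. f_equal; lia. Qed.

Lemma hess_sum_S1_S1 k x i j g : (i <= L)%nat -> (j <= L)%nat ->
  hess_sum n (network_reactions N k) x (S1 i) (S1 j) g = 0.
Proof.
  intros Hi Hj. destruct (H2_partition n N c1 HN1 HN2 Hc1) as [p [Hp HpS]].
  apply (hess_sum_same_part n N k HN1 p); auto. apply HpS; lia.
Qed.

Section Rates.
Variable k : rates.
Hypothesis Hk : positive_rates N k.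

Lemma rates1_pos t : (1 <= t <= L)%nat -> 0 < rt_a k c1 t /\ 0 < rt_b k c1 t /\ 0 < rt_c k c1 t.
Proof. intros. apply Hk; auto. unfold Lc in HL1; lia. Qed.

Lemma rates2_pos t : (1 <= t <= L)%nat -> 0 < rt_a k c2 t /\ 0 < rt_b k c2 t /\ 0 < rt_c k c2 t.
Proof. intros. apply Hk; auto. unfold Lc in HL2; lia. Qed.

Local Notation g l E := (deriv_grad n N k l o E).
Local Notation h l E := (deriv_hess n N k l o E).

Lemma grad_Y1_Y1 l : g l Y1 Y1 = 0.
Proof.
  destruct l.
  - apply kron_neq, S1_neq_Y1; lia.
  - rewrite deriv_grad_succ by auto. apply jacT_enzyme; auto.
Qed.

(* Each step back along the first chain costs two derivatives. *)
Lemma grad_chain1_vanish l :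
  (forall t, (t <= L)%nat -> (l < 2 * (L - t))%nat -> g l Y1 (S1 t) = 0) /\
  (forall t, (1 <= t <= L)%nat -> (l < 2 * (L - t) + 1)%nat -> g l Y1 (U1 t) = 0).
Proof.
  induction l as [|l [IHS IHU]]; split; intros t Ht Hl.
  - apply kron_neq. intros E. apply S1_inj in E; lia.
  - apply kron_neq. intros E. apply (U1_neq_S1 t L); auto.
  - rewrite deriv_grad_succ, jacT_substrate by (auto; lia).
    rewrite IHU, grad_Y1_Y1, IHS by lia. ring.
  - rewrite deriv_grad_succ, jacT_intermediate by (auto; lia).
    rewrite IHU, grad_Y1_Y1, !IHS by lia. ring.
Qed.

Lemma grad_U1_succ l t : (1 <= t <= L)%nat -> (l < 2 * (L - t) + 2)%nat ->
  g (S l) Y1 (U1 t) = rt_b k c1 t * (g l Y1 Y1 - g l Y1 (U1 t))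
                    + rt_c k c1 t * (g l Y1 Y1 + g l Y1 (S1 t) - g l Y1 (U1 t)).
Proof.
  intros Ht Hl. rewrite deriv_grad_succ, jacT_intermediate by (auto; lia).
  rewrite (proj1 (grad_chain1_vanish l) (t - 1)%nat); [ring | lia | lia].
Qed.

Lemma grad_S1_pos m : (m <= L)%nat -> 0 < g (2 * m) Y1 (S1 (L - m)).
Proof.
  induction m as [|m IHm]; intros Hm.
  - rewrite deriv_grad_zero, Nat.sub_0_r, kron_refl. lra.
  - replace (2 * S m)%nat with (S (S (2 * m))) by lia.
    replace (L - S m)%nat with (L - m - 1)%nat by lia.
    rewrite deriv_grad_succ, jacT_substrate by (auto; lia).
    replace (S (L - m - 1)) with (L - m)%nat by lia.
    rewrite grad_U1_succ, !grad_Y1_Y1, (proj1 (grad_chain1_vanish _) (L - m - 1)%nat),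
      (proj2 (grad_chain1_vanish _) (L - m)%nat) by lia.
    destruct (rates1_pos (L - m)) as [Ha [_ Hc]]; [lia|].
    specialize (IHm ltac:(lia)).
    replace (_ * (_ * (0 - 0) + _ * (0 + _ - 0) - 0 - 0))
      with (rt_a k c1 (L - m) * rt_c k c1 (L - m) * g (2 * m) Y1 (S1 (L - m))) by ring.
    apply Rmult_lt_0_compat; [apply Rmult_lt_0_compat|]; auto.
Qed.

Lemma grad_U2_succ l m : (1 <= m <= L)%nat -> (l < 2 * m)%nat ->
  g (S l) Y1 (U2 m) = rt_b k c2 m * (g l Y1 Y2 + g l Y1 (S1 (L - (m - 1))) - g l Y1 (U2 m))
                    + rt_c k c2 m * (g l Y1 Y2 - g l Y1 (U2 m)).
Proof.
  intros Hm Hl. rewrite deriv_grad_succ, jacT_intermediate, !HS2 by (auto; lia).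
  rewrite (proj1 (grad_chain1_vanish l) (L - m)%nat); [ring | lia | lia].
Qed.

Lemma jacT_Y1_S1_L v : jacT n (network_reactions N k) (unit_at Y1) (S1 L) v = 0.
Proof. rewrite <- HL1. apply jacT_last_substrate; auto. Qed.

Lemma hess_sum_Y1_S1_L x f : hess_sum n (network_reactions N k) x Y1 (S1 L) f = 0.
Proof. rewrite <- HL1. apply hess_sum_enzyme_last_substrate; auto. Qed.

Lemma kron_o_S1 i : (i < L)%nat -> kron o (S1 i) = 0.
Proof. intros Hi. apply kron_neq. intros E. apply S1_inj in E; lia. Qed.

Lemma kron_o_U1 t : (1 <= t <= L)%nat -> kron o (U1 t) = 0.
Proof. intros Ht. apply kron_neq, not_eq_sym, U1_neq_S1; lia. Qed.

Lemma kron_o_Y1 : kron o Y1 = 0.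
Proof. apply kron_neq, S1_neq_Y1; lia. Qed.

Lemma hess1_U1_l t a : (1 <= t <= L)%nat -> h 1 Y1 (U1 t) a = 0.
Proof. intros Ht. rewrite deriv_hess_one by auto. apply hess_sum_intermediate; auto; lia. Qed.

Lemma hess1_U1_r t a : (1 <= t <= L)%nat -> h 1 Y1 a (U1 t) = 0.
Proof.
  intros Ht. rewrite deriv_hess_one, hess_sum_sym by auto.
  apply hess_sum_intermediate; auto; lia.
Qed.

Lemma hess1_Y1_Y1 : h 1 Y1 Y1 Y1 = 0.
Proof. rewrite deriv_hess_one by auto. apply hess_sum_diag; auto. Qed.

Lemma hess1_S1_S1 i j : (i <= L)%nat -> (j <= L)%nat -> h 1 Y1 (S1 i) (S1 j) = 0.
Proof. intros. rewrite deriv_hess_one by auto. apply hess_sum_S1_S1; auto. Qed.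

Lemma hess1_Y1_S1 i : (i <= L)%nat -> h 1 Y1 Y1 (S1 i) = 0.
Proof.
  intros Hi. rewrite deriv_hess_one by auto. destruct (Nat.eq_dec i L) as [->|Hne].
  - apply hess_sum_Y1_S1_L.
  - rewrite hess_sum_enzyme_substrate, reaction_dot_rxn_bind by (auto; lia).
    replace (S i - 1)%nat with i by lia.
    rewrite kron_o_U1, kron_o_Y1, kron_o_S1 by lia. ring.
Qed.

Lemma hess1_S1_Y1 i : (i <= L)%nat -> h 1 Y1 (S1 i) Y1 = 0.
Proof.
  intros Hi. rewrite deriv_hess_one, hess_sum_sym, <- deriv_hess_one by auto.
  apply hess1_Y1_S1; auto.
Qed.

Local Ltac hess1_Y1_simpl :=
  repeat first [ rewrite hess1_U1_l by lia | rewrite hess1_U1_r by lia | rewrite hess1_Y1_Y1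
               | rewrite hess1_Y1_S1 by lia | rewrite hess1_S1_Y1 by lia
               | rewrite hess1_S1_S1 by lia ].

Lemma grad1_U1_L : g 1 Y1 (U1 L) = rt_c k c1 L.
Proof.
  rewrite grad_U1_succ by lia. rewrite !deriv_grad_zero, kron_o_U1, kron_o_Y1, kron_refl by lia.
  ring.
Qed.

Lemma grad2_U1_L : g 2 Y1 (U1 L) = - (rt_b k c1 L + rt_c k c1 L) * rt_c k c1 L.
Proof.
  rewrite grad_U1_succ, grad_Y1_Y1, grad1_U1_L by lia.
  rewrite deriv_grad_succ, jacT_Y1_S1_L by auto. ring.
Qed.

Lemma hess2_S1pred_Y1 : h 2 Y1 (S1 (L - 1)) Y1 = rt_a k c1 L * rt_c k c1 L.
Proof.
  rewrite deriv_hess_succ, hess_sum_sym, hess_sum_enzyme_substrate, jacT_substrate, jacT_enzyme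
    by (auto; lia).
  replace (S (L - 1)) with L by lia.
  rewrite reaction_dot_rxn_bind by (auto; lia).
  rewrite grad1_U1_L, grad_Y1_Y1, (proj1 (grad_chain1_vanish 1) (L - 1)%nat) by lia.
  hess1_Y1_simpl. ring.
Qed.

Lemma hess2_S1pred_U1 t : (1 <= t <= L)%nat -> h 2 Y1 (S1 (L - 1)) (U1 t) = 0.
Proof.
  intros Ht.
  rewrite deriv_hess_succ, hess_sum_sym, hess_sum_intermediate, jacT_substrate, jacT_intermediate
    by (auto; lia).
  replace (S (L - 1)) with L by lia.
  hess1_Y1_simpl. ring.
Qed.

Lemma hess2_S1pred_S1 i : (i <= L)%nat -> h 2 Y1 (S1 (L - 1)) (S1 i) = 0.
Proof.
  intros Hi. rewrite deriv_hess_succ, hess_sum_S1_S1, (jacT_substrate n N k HN1 c1 (L - 1))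
    by (auto; lia).
  replace (S (L - 1)) with L by lia.
  hess1_Y1_simpl.
  destruct (Nat.eq_dec i L) as [->|Hne].
  - rewrite jacT_Y1_S1_L. ring.
  - rewrite jacT_substrate by (auto; lia). hess1_Y1_simpl. ring.
Qed.

(* The order-2 entries on the right are observed data, so they need not be evaluated. *)
Lemma hess3_S1pred_S1 t : (1 <= t <= L)%nat ->
  h 3 Y1 (S1 (L - 1)) (S1 (t - 1)) = - rt_a k c1 t * (rt_a k c1 L * rt_c k c1 L)
   + rt_a k c1 L * (h 2 Y1 (S1 (t - 1)) (U1 L) - h 2 Y1 (S1 (t - 1)) Y1
                    - h 2 Y1 (S1 (t - 1)) (S1 (L - 1))).
Proof.
  intros Ht. rewrite deriv_hess_succ, hess_sum_S1_S1, !jacT_substrate by (auto; lia).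
  replace (S (L - 1)) with L by lia. replace (S (t - 1)) with t by lia.
  rewrite hess2_S1pred_U1, hess2_S1pred_Y1, hess2_S1pred_S1 by lia. ring.
Qed.

Lemma hess3_S1pred_U1 t : (1 <= t <= L)%nat ->
  h 3 Y1 (S1 (L - 1)) (U1 t) = (rt_b k c1 t + rt_c k c1 t) * (rt_a k c1 L * rt_c k c1 L)
   + rt_a k c1 L * (h 2 Y1 (U1 t) (U1 L) - h 2 Y1 (U1 t) Y1 - h 2 Y1 (U1 t) (S1 (L - 1))).
Proof.
  intros Ht.
  rewrite deriv_hess_succ, hess_sum_sym, hess_sum_intermediate, jacT_substrate,
    jacT_intermediate by (auto; lia).
  replace (S (L - 1)) with L by lia.
  rewrite hess2_S1pred_U1, hess2_S1pred_Y1, !hess2_S1pred_S1 by lia. ring.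
Qed.

Lemma kron_o_U2 t : (1 <= t <= L)%nat -> kron o (U2 t) = 0.
Proof. intros Ht. apply kron_neq, not_eq_sym, U2_neq_S1; lia. Qed.

Lemma kron_o_Y2 : kron o Y2 = 0.
Proof. apply kron_neq, not_eq_sym, Y2_neq_S1; lia. Qed.

Lemma grad1_S2_0 : g 1 Y2 (S2 0) = - rt_a k c2 1.
Proof.
  rewrite deriv_grad_succ, jacT_substrate by (auto; lia).
  rewrite !deriv_grad_zero, kron_o_U2, kron_o_Y2, <- o_eq_S2_0, kron_refl by lia. ring.
Qed.

Lemma hess1_U2_l m a : (1 <= m <= L)%nat -> h 1 Y2 (U2 m) a = 0.
Proof. intros Hm. rewrite deriv_hess_one by auto. apply hess_sum_intermediate; auto; lia. Qed.

Lemma hess1_U2_r m a : (1 <= m <= L)%nat -> h 1 Y2 a (U2 m) = 0.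
Proof.
  intros Hm. rewrite deriv_hess_one, hess_sum_sym by auto.
  apply hess_sum_intermediate; auto; lia.
Qed.

Lemma hess1_Y2_S2_0 : h 1 Y2 Y2 (S2 0) = - rt_a k c2 1.
Proof.
  rewrite deriv_hess_one, hess_sum_enzyme_substrate, reaction_dot_rxn_bind by (auto; lia).
  rewrite kron_o_U2, kron_o_Y2, Nat.sub_diag, <- o_eq_S2_0, kron_refl by lia. ring.
Qed.

Lemma hess1_S2_0_Y2 : h 1 Y2 (S2 0) Y2 = - rt_a k c2 1.
Proof. rewrite deriv_hess_one, hess_sum_sym, <- deriv_hess_one by auto. apply hess1_Y2_S2_0. Qed.

Lemma hess1_S2_S2 i j : (i <= L)%nat -> (j <= L)%nat -> h 1 Y2 (S2 i) (S2 j) = 0.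
Proof. intros. rewrite deriv_hess_one, !HS2 by auto. apply hess_sum_S1_S1; lia. Qed.

Lemma hess2_S2_0_S2 m : (1 <= m <= L)%nat ->
  h 2 Y2 (S2 0) (S2 (m - 1)) = rt_a k c2 m * rt_a k c2 1
   + rt_a k c2 1 * (h 1 Y2 (S2 (m - 1)) (U2 1) - h 1 Y2 (S2 (m - 1)) Y2
                    - h 1 Y2 (S2 (m - 1)) (S2 0)).
Proof.
  intros Hm. rewrite deriv_hess_succ, !HS2, hess_sum_S1_S1, <- !HS2 by (auto; lia).
  rewrite !jacT_substrate by (auto; lia). replace (S (m - 1)) with m by lia.
  rewrite hess1_U2_r, hess1_S2_0_Y2, hess1_S2_S2 by lia. ring.
Qed.

Lemma hess2_S2_0_U2 m : (1 <= m <= L)%nat ->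
  h 2 Y2 (S2 0) (U2 m) = - (rt_b k c2 m + rt_c k c2 m) * rt_a k c2 1.
Proof.
  intros Hm.
  rewrite deriv_hess_succ, hess_sum_sym, hess_sum_intermediate, jacT_substrate, jacT_intermediate
    by (auto; lia).
  rewrite hess1_S2_0_Y2, !hess1_S2_S2, !hess1_U2_l, hess1_U2_r by lia. ring.
Qed.

End Rates.

Section Identification.
Variables k1 k2 : rates.
Hypothesis Hk1 : positive_rates N k1.
Hypothesis Hk2 : positive_rates N k2.
Hypothesis Hdata : forall i, In i (o :: nil) -> forall l, (1 <= l <= Nat.max 2 (2 * L - 1))%nat ->
  forall x : nat -> R, peval x (deriv_iter n N k1 l i) = peval x (deriv_iter n N k2 l i).

Lemma grad_data_eq l E j : (l <= Nat.max 2 (2 * L - 1))%nat ->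
  deriv_grad n N k1 l o E j = deriv_grad n N k2 l o E j.
Proof.
  intros Hl. destruct l; [reflexivity|].
  apply peval_pderiv_ext. intros x. apply Hdata; [left; reflexivity | lia].
Qed.

Lemma hess_data_eq l E i j : (l <= Nat.max 2 (2 * L - 1))%nat ->
  deriv_hess n N k1 l o E i j = deriv_hess n N k2 l o E i j.
Proof.
  intros Hl. destruct l; [reflexivity|].
  apply peval_pderiv_ext, peval_pderiv_ext. intros x. apply Hdata; [left; reflexivity | lia].
Qed.

Lemma rt_c1_L_eq : rt_c k1 c1 L = rt_c k2 c1 L.
Proof. rewrite <- (grad1_U1_L k1), <- (grad1_U1_L k2); auto. apply grad_data_eq; lia. Qed.

Lemma rt_a1_L_eq : rt_a k1 c1 L = rt_a k2 c1 L.
Proof.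
  pose proof (hess_data_eq 2 Y1 (S1 (L - 1)) Y1 ltac:(lia)) as H.
  rewrite (hess2_S1pred_Y1 k1), (hess2_S1pred_Y1 k2), <- rt_c1_L_eq in H by auto.
  destruct (rates1_pos k1 Hk1 L) as [_ [_ Hc]]; [lia|].
  apply (Rmult_eq_reg_r (rt_c k1 c1 L)); lra.
Qed.

Lemma rt_bc1_L_eq : rt_b k1 c1 L + rt_c k1 c1 L = rt_b k2 c1 L + rt_c k2 c1 L.
Proof.
  pose proof (grad_data_eq 2 Y1 (U1 L) ltac:(lia)) as H.
  rewrite (grad2_U1_L k1), (grad2_U1_L k2), <- rt_c1_L_eq in H by auto.
  destruct (rates1_pos k1 Hk1 L) as [_ [_ Hc]]; [lia|].
  rewrite <- rt_c1_L_eq. apply (Rmult_eq_reg_r (- rt_c k1 c1 L)); lra.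
Qed.

Lemma rt_a1_eq t : (1 <= t <= L)%nat -> rt_a k1 c1 t = rt_a k2 c1 t.
Proof.
  intros Ht. destruct (Nat.eq_dec t L) as [->|HtL]; [apply rt_a1_L_eq|].
  pose proof (hess_data_eq 3 Y1 (S1 (L - 1)) (S1 (t - 1)) ltac:(lia)) as H.
  rewrite (hess3_S1pred_S1 k1), (hess3_S1pred_S1 k2), <- rt_a1_L_eq, <- rt_c1_L_eq,
    !(hess_data_eq 2) in H by (auto; lia).
  destruct (rates1_pos k1 Hk1 L) as [Ha [_ Hc]]; [lia|].
  assert (HP : 0 < rt_a k1 c1 L * rt_c k1 c1 L) by (apply Rmult_lt_0_compat; auto).
  apply (Rmult_eq_reg_r (rt_a k1 c1 L * rt_c k1 c1 L)); lra.
Qed.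

Lemma rt_bc1_eq t : (1 <= t <= L)%nat ->
  rt_b k1 c1 t + rt_c k1 c1 t = rt_b k2 c1 t + rt_c k2 c1 t.
Proof.
  intros Ht. destruct (Nat.eq_dec t L) as [->|HtL]; [apply rt_bc1_L_eq|].
  pose proof (hess_data_eq 3 Y1 (S1 (L - 1)) (U1 t) ltac:(lia)) as H.
  rewrite (hess3_S1pred_U1 k1), (hess3_S1pred_U1 k2), <- rt_a1_L_eq, <- rt_c1_L_eq,
    !(hess_data_eq 2) in H by (auto; lia).
  destruct (rates1_pos k1 Hk1 L) as [Ha [_ Hc]]; [lia|].
  assert (HP : 0 < rt_a k1 c1 L * rt_c k1 c1 L) by (apply Rmult_lt_0_compat; auto).
  apply (Rmult_eq_reg_r (rt_a k1 c1 L * rt_c k1 c1 L)); lra.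
Qed.

Lemma rt_bc1_split_eq t : (1 <= t <= L)%nat ->
  rt_b k1 c1 t = rt_b k2 c1 t /\ rt_c k1 c1 t = rt_c k2 c1 t.
Proof.
  intros Ht. pose proof (grad_data_eq (S (2 * (L - t))) Y1 (U1 t) ltac:(lia)) as H.
  rewrite (grad_U1_succ k1), (grad_U1_succ k2), !(grad_data_eq (2 * (L - t))) in H
    by (auto; lia).
  pose proof (grad_S1_pos k2 Hk2 (L - t) ltac:(lia)) as Hs.
  replace (L - (L - t))%nat with t in Hs by lia.
  eapply pair_from_sum_and_combination; [| apply rt_bc1_eq; auto | exact H]. lra.
Qed.

Lemma rt_a2_1_eq : rt_a k1 c2 1 = rt_a k2 c2 1.
Proof.
  pose proof (grad_data_eq 1 Y2 (S2 0) ltac:(lia)) as H.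
  rewrite (grad1_S2_0 k1), (grad1_S2_0 k2) in H. lra.
Qed.

Lemma rt_a2_eq m : (1 <= m <= L)%nat -> rt_a k1 c2 m = rt_a k2 c2 m.
Proof.
  intros Hm. pose proof (hess_data_eq 2 Y2 (S2 0) (S2 (m - 1)) ltac:(lia)) as H.
  rewrite (hess2_S2_0_S2 k1), (hess2_S2_0_S2 k2), <- rt_a2_1_eq, !(hess_data_eq 1) in H
    by (auto; lia).
  destruct (rates2_pos k1 Hk1 1) as [Ha _]; [lia|].
  apply (Rmult_eq_reg_r (rt_a k1 c2 1)); lra.
Qed.

Lemma rt_bc2_eq m : (1 <= m <= L)%nat ->
  rt_b k1 c2 m + rt_c k1 c2 m = rt_b k2 c2 m + rt_c k2 c2 m.
Proof.
  intros Hm. pose proof (hess_data_eq 2 Y2 (S2 0) (U2 m) ltac:(lia)) as H.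
  rewrite (hess2_S2_0_U2 k1), (hess2_S2_0_U2 k2), <- rt_a2_1_eq in H by auto.
  destruct (rates2_pos k1 Hk1 1) as [Ha _]; [lia|].
  apply (Rmult_eq_reg_r (- rt_a k1 c2 1)); lra.
Qed.

Lemma rt_bc2_split_eq m : (1 <= m <= L)%nat ->
  rt_b k1 c2 m = rt_b k2 c2 m /\ rt_c k1 c2 m = rt_c k2 c2 m.
Proof.
  intros Hm. pose proof (grad_data_eq (S (2 * (m - 1))) Y1 (U2 m) ltac:(lia)) as H.
  rewrite (grad_U2_succ k1), (grad_U2_succ k2), !(grad_data_eq (2 * (m - 1))) in H
    by (auto; lia).
  pose proof (grad_S1_pos k2 Hk2 (m - 1) ltac:(lia)) as Hs.
  eapply pair_from_sum_and_combination; [| apply rt_bc2_eq; auto | exact H]. lra.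
Qed.

Lemma two_chain_constants_eq :
  two_chain_constants c1 c2 L k1 = two_chain_constants c1 c2 L k2.
Proof.
  apply map_ext_in. intros j Hj. apply in_seq in Hj.
  destruct (rt_bc1_split_eq j) as [Hb1 Hc1']; [lia|].
  destruct (rt_bc2_split_eq j) as [Hb2 Hc2']; [lia|].
  rewrite rt_a1_eq, rt_a2_eq, Hb1, Hc1', Hb2, Hc2' by lia. reflexivity.
Qed.

End Identification.
End TwoChains.

Theorem mainTheorem3 :
  forall (n : nat) (N : list chain) (c1 c2 L : nat),
    H1 n N -> H2 n N ->
    (c1 < length N)%nat -> (c2 < length N)%nat -> c1 <> c2 ->
    (1 <= L)%nat ->
    ch_L (chain_at N c1) = L ->
    ch_L (chain_at N c2) = L ->
    (forall i, (i <= L)%nat -> ch_S (chain_at N c2) i = ch_S (chain_at N c1) (L - i)) ->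
    identifiable n N (two_chain_constants c1 c2 L)
      (ch_S (chain_at N c1) L :: nil) (Nat.max 2 (2 * L - 1)).
Proof.
  intros n N c1 c2 L HN1 HN2 Hc1 Hc2 _ HL HL1 HL2 HS2 k1 k2 Hk1 Hk2 Hdata.
  exact (two_chain_constants_eq n N c1 c2 L HN1 HN2 Hc1 Hc2 HL HL1 HL2 HS2 k1 k2 Hk1 Hk2 Hdata).
Qed.
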